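(* A cograph $G$ has outcome $\mathcal D$ in the Maker-Breaker domination game if and only if $G$ admits a pairing dominating set.
   Context: Cographs are the graphs that can be built from single vertices by repeatedly taking disjoint unions and joins (equivalently, $P_4$-free graphs). Given a graph $G=(V,E)$, a pairing dominating set is a set of pairs of vertices $\{(u_1,v_1),\ldots,(u_k,v_k)\}$, where all $2k$ vertices are distinct, such that $V=\bigcup_{i=1}^k \big(N[u_i]\cap N[v_i]\big)$, with $N[x]$ the closed neighborhood of $x$. The Maker-Breaker domination game on $G$: Dominator and Staller alternately choose a not-yet-chosen vertex (no passing), starting with all vertices unchosen; when all vertices are chosen, Dominator wins if his vertices form a dominating set of $G$, otherwise Staller wins. Outcome $\mathcal D$ means Dominator has a winning strategy both as first and as second player. *)

(* Finite simple graphs as symmetric irreflexive relations on a finType. *)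
From mathcomp Require Import all_boot.
Set Implicit Arguments. Unset Strict Implicit. Unset Printing Implicit Defensive.

Section Graphs.
Variable V : finType.
Variable e : rel V.

Definition cnbh (x : V) : {set V} := x |: [set y | e x y].

Definition cograph : Prop :=
  forall a b c d : V,
    e a b -> e b c -> e c d -> ~~ e a c -> ~~ e b d -> ~~ e a d -> False.

Definition dominating (D : {set V}) : bool :=
  [forall x, [exists y in D, x \in cnbh y]].

Definition pairing_dominating_set (P : seq (V * V)) : Prop :=
  uniq (flatten [seq [:: p.1; p.2] | p <- P]) /\
  forall x : V, exists2 p, p \in P & (x \in cnbh p.1) && (x \in cnbh p.2).

Definition admits_pairing_dominating_set : Prop :=
  exists P : seq (V * V), pairing_dominating_set P.

(* A position is (D, S): vertices chosen by
   Dominator and by Staller; the boolean says whether Dominator is to move.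
   DomWins D S t : Dominator has a winning strategy from this position
   (least fixed point = winning in finitely many moves; the game is finite). *)
Inductive DomWins : {set V} -> {set V} -> bool -> Prop :=
  | DW_end D S t :
      D :|: S = setT -> dominating D -> DomWins D S t
  | DW_dom D S v :
      v \notin D :|: S -> DomWins (v |: D) S false -> DomWins D S true
  | DW_stall D S :
      D :|: S != setT ->
      (forall v, v \notin D :|: S -> DomWins D (v |: S) true) ->
      DomWins D S false.

Definition outcome_D : Prop :=
  DomWins set0 set0 true /\ DomWins set0 set0 false.

End Graphs.

From mathcomp Require Import all_boot.
Set Implicit Arguments. Unset Strict Implicit. Unset Printing Implicit Defensive.

(* A pairing dominating set gives Dominator a pairing strategy: whenever Staller
   takes a vertex of a pair whose partner is still free, Dominator takes the
   partner, so at the end every pair holds a Dominator vertex and every vertex is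
   dominated.
   Conversely, a cograph on at least two vertices splits into two nonempty parts
   with either no edge or every edge between them. Along this decomposition one
   shows that every induced subgraph G[X] either has a pairing dominating set or
   Staller, moving first, can claim a whole closed neighbourhood of G[X]; and
   either it has one with at most one unpaired vertex or Staller achieves this
   even moving second. In a disjoint union, Staller plays in a part where he
   wins, and moving second he first answers in the part Dominator did not touch;
   in a join with a single vertex w, Staller takes w first and continues in the
   rest, while a join of two parts with two vertices each is dominated by one pair
   from each part. For X = V, a Staller win contradicts a winning strategy of Dominator. *)

Section Decomposition.
Variable V : finType.
Implicit Types (r : rel V) (A B M X : {set V}).

Definition anticomplete r A B := forall a b, a \in A -> b \in B -> ~~ r a b.
Definition complete r A B := forall a b, a \in A -> b \in B -> r a b.

Definition decomposes r X A B :=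
  [/\ A :|: B = X, [disjoint A & B], A != set0, B != set0 &
      anticomplete r A B \/ complete r A B].

Definition compl_rel r : rel V := fun a b => (a != b) && ~~ r a b.

Lemma compl_rel_sym r : symmetric r -> symmetric (compl_rel r).
Proof. by move=> sr a b; rewrite /compl_rel eq_sym sr. Qed.

Lemma cograph_compl_rel r : symmetric r -> cograph r -> cograph (compl_rel r).
Proof.
move=> sr P4 a b c d ab bc cd nac nbd nad.
have [eac|a'c] := eqVneq a c; first by rewrite eac cd in nad.
have [ebd|b'd] := eqVneq b d; first by rewrite -ebd ab in nad.
have [ead|a'd] := eqVneq a d; first by rewrite ead compl_rel_sym // cd in nac.
move: ab bc cd nac nbd nad; rewrite /compl_rel a'c b'd a'd /= !negbK.
move=> /andP [_ rab] /andP [_ rbc] /andP [_ rcd] rac rbd rad.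
by apply: (P4 c a d b); rewrite // sr.
Qed.

Lemma anticomplete_sym r A B : symmetric r -> anticomplete r A B -> anticomplete r B A.
Proof. by move=> sr anti b a bB aA; rewrite sr anti. Qed.

Lemma decomposes_compl_rel r X A B : decomposes (compl_rel r) X A B -> decomposes r X A B.
Proof.
case=> uAB dAB A0 B0 sAB; split=> //.
have neq a b : a \in A -> b \in B -> a != b.
  by move=> aA bB; apply: contraTneq bB => <-; rewrite (disjointFr dAB aA).
case: sAB => sAB; [right | left] => a b aA bB; have := sAB a b aA bB;
  by rewrite /compl_rel neq // ?negbK.
Qed.

Lemma decomposes_complement r M X : M \subset X -> M != set0 -> M != X ->
  anticomplete r M (X :\: M) -> decomposes r X M (X :\: M).
Proof.
move=> sMX M0 MX anti; split=> //; last by left.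
- by apply/setP=> x; rewrite !inE; case: (boolP (x \in M)) => //= /(subsetP sMX).
- by rewrite disjoints_subset; apply/subsetP=> x; rewrite !inE => ->.
- by rewrite setD_eq0; apply: contra MX => sXM; rewrite eqEsubset sMX.
Qed.

Lemma decomposes_nonneighbours r v A B y z : symmetric r -> cograph r ->
  v \notin A :|: B -> anticomplete r A B -> y \in A -> ~~ r v y -> z \in B -> r v z ->
  exists A' B', decomposes r (v |: (A :|: B)) A' B'.
Proof.
move=> sr P4 vAB anti yA nvy zB rvz; set M := [set a in A | ~~ r v a].
exists M, ((v |: (A :|: B)) :\: M); apply: decomposes_complement.
- by apply/subsetP=> a; rewrite !inE => /andP [->]; rewrite orbT.
- by apply/set0Pn; exists y; rewrite inE yA.
- apply: contraNneq vAB => EM; have := setU11 v (A :|: B).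
  by rewrite -EM !inE => /andP [->].
move=> m x; rewrite !inE => /andP [mA nvm] /andP [xM /or3P [/eqP -> | xA | xB]].
- by rewrite sr.
- move: xM; rewrite xA negbK /= => rvx; apply/negP=> rmx.
  (* otherwise m - x - v - z is an induced P4 *)
  by apply: (P4 m x v z) => //; try exact: anti; rewrite sr.
- exact: anti.
Qed.

Lemma decomposes_add_vertex r v A B : symmetric r -> cograph r ->
  v \notin A :|: B -> A != set0 -> B != set0 -> anticomplete r A B ->
  exists A' B', decomposes r (v |: (A :|: B)) A' B'.
Proof.
move=> sr P4 vAB A0 B0 anti.
have [/exists_inP [z zB rvz] | /exists_inP nvB] := boolP [exists z in B, r v z]; last first.
  exists B, ((v |: (A :|: B)) :\: B); apply: decomposes_complement => //.
  - by apply/subsetP=> b bB; rewrite !inE bB !orbT.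
  - apply: contraNneq vAB => EB; have := setU11 v (A :|: B).
    by rewrite -EB inE => ->; rewrite orbT.
  move=> b x bB; rewrite !inE => /andP [xB /or3P [/eqP xv | xA | ]].
  - by rewrite xv sr; apply/negP=> rvb; apply: nvB; exists b.
  - exact: (anticomplete_sym sr anti).
  - by rewrite (negPf xB).
have [/exists_inP [y yA nvy] | /exists_inP vA] := boolP [exists y in A, ~~ r v y].
  exact: decomposes_nonneighbours yA nvy zB rvz.
have [/exists_inP [y yB nvy] | /exists_inP vB] := boolP [exists y in B, ~~ r v y].
  have [a aA] := set0Pn _ A0; have rva : r v a by apply/negPn/negP=> nva; apply: vA; exists a.
  rewrite [A :|: B]setUC; apply: decomposes_nonneighbours yB nvy aA rva => //.
    by rewrite setUC.
  exact: anticomplete_sym.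
exists [set v], (A :|: B); split => //.
- by rewrite disjoints1.
- by apply/set0Pn; exists v; rewrite inE.
- by rewrite setU_eq0 negb_and A0.
right=> _ x /set1P -> /setUP [xA | xB].
  by apply/negPn/negP=> nvx; apply: vA; exists x.
by apply/negPn/negP=> nvx; apply: vB; exists x.
Qed.

Lemma cograph_decomposes r X : symmetric r -> cograph r -> 1 < #|X| ->
  exists A B, decomposes r X A B.
Proof.
move=> sr P4; have [n] := ubnP #|X|; elim: n X => // n IH X /ltnSE leXn X2.
have [v vX] : exists v, v \in X by apply/set0Pn; rewrite -card_gt0 ltnW.
have XvE : X = v |: (X :\ v) by rewrite setD1K.
have [Xv1 | Xv2] := leqP #|X :\ v| 1.
  have /cards1P [y Xv] : #|X :\ v| == 1.
    by move: X2; rewrite (cardsD1 v) vX add1n ltnS => X2; rewrite eqn_leq Xv1.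
  have yv : y != v by have := set11 y; rewrite -Xv !inE => /andP [].
  exists [set v], [set y]; split.
  - by rewrite XvE Xv.
  - by rewrite disjoints1 inE eq_sym.
  - by apply/set0Pn; exists v; rewrite inE.
  - by apply/set0Pn; exists y; rewrite inE.
  - by case: (boolP (r v y)) => rvy; [right | left] => a b /set1P -> /set1P ->.
have [|A [B [Xv dAB A0 B0 [anti | cAB]]]] := IH (X :\ v) _ Xv2.
- by apply: leq_trans leXn; rewrite (cardsD1 v X) vX.
- by rewrite XvE -Xv; apply: decomposes_add_vertex; rewrite // Xv !inE eqxx.
have anti : anticomplete (compl_rel r) A B.
  by move=> a b aA bB; rewrite /compl_rel (cAB a b aA bB) andbF.
have [A' [B' dec]] : exists A' B', decomposes (compl_rel r) X A' B'.
  rewrite XvE -Xv; apply: decomposes_add_vertex; rewrite // ?Xv ?inE ?eqxx //.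
  - exact: compl_rel_sym.
  - exact: cograph_compl_rel.
by exists A', B'; apply: decomposes_compl_rel.
Qed.

End Decomposition.

Lemma card_setDU1_lt (T : finType) (X Y : {set T}) v :
  v \in X :\: Y -> #|X :\: (v |: Y)| < #|X :\: Y|.
Proof. by move=> vXY; rewrite setUC -setDDl; apply/proper_card/properD1. Qed.

Lemma disjoint_setU1l (T : finType) (A B : {set T}) v :
  [disjoint A & B] -> v \notin B -> [disjoint v |: A & B].
Proof.
by move=> dAB vB; rewrite -setI_eq0 setIUl (disjoint_setI0 dAB) setU0 setI_eq0 disjoints1.
Qed.

Section StallerGame.
Variable V : finType.
Variable e : rel V.
Implicit Types (A B X W D S : {set V}) (t : bool).

Definition staller_won X S := [exists x in X, cnbh e x :&: X \subset S].

(* Stated positively, so that no determinacy argument is needed. *)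
Inductive StallerWins X : {set V} -> {set V} -> bool -> Prop :=
  | SW_end D S t : staller_won X S -> StallerWins X D S t
  | SW_stall D S v :
      v \in X :\: (D :|: S) -> StallerWins X D (v |: S) true -> StallerWins X D S false
  | SW_dom D S :
      X :\: (D :|: S) != set0 ->
      (forall v, v \in X :\: (D :|: S) -> StallerWins X (v |: D) S false) ->
      StallerWins X D S true.

Lemma staller_won_subset X S S' : S \subset S' -> staller_won X S -> staller_won X S'.
Proof.
move=> sSS' /exists_inP [x xX sub]; apply/exists_inP; exists x => //.
exact: subset_trans sSS'.
Qed.

Lemma StallerWins_stuck X D S t :
  StallerWins X D S t -> X :\: (D :|: S) = set0 -> staller_won X S.
Proof.
case=> // [D' S' v vfree _ | D' S' nfree _] X0; first by rewrite X0 inE in vfree.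
by rewrite X0 eqxx in nfree.
Qed.

Lemma StallerWins_dom_inv X D S : StallerWins X D S true ->
  staller_won X S \/ forall v, v \in X :\: (D :|: S) -> StallerWins X (v |: D) S false.
Proof. by move E: true => t H; case: H E => [D' S' t' W | // | D' S' _ H] _; [left | right]. Qed.

Lemma StallerWins_stall_inv X D S : StallerWins X D S false ->
  staller_won X S \/ exists2 v, v \in X :\: (D :|: S) & StallerWins X D (v |: S) true.
Proof.
move E: false => t H; case: H E => [D' S' t' W | D' S' v vfree H | //] _; first by left.
by right; exists v.
Qed.

Lemma StallerWins_addS X D S t u :
  StallerWins X D S t -> u \notin D -> StallerWins X D (u |: S) t.
Proof.
move=> H; elim: H u => {D S t} [D S t W | D S v vfree H IH | D S ne H IH] u uD.
- by apply: SW_end; apply: staller_won_subset W; apply: subsetUr.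
- have [<- | vu] := eqVneq v u.
    have [X0 | /set0Pn [w wfree]] := eqVneq (X :\: (D :|: (v |: S))) set0; last first.
      have wD : w \notin D by move: wfree; rewrite !inE negb_or => /andP [/andP [->]].
      exact: SW_stall wfree (IH w wD).
    exact/SW_end/(StallerWins_stuck H).
  apply: (SW_stall (v := v)); last by rewrite setUCA; apply: IH.
  by move: vfree; rewrite !inE !negb_or (negPf vu) => /andP [/andP [-> ->] ->].
- have [X0 | /set0Pn [w wfree]] := eqVneq (X :\: (D :|: (u |: S))) set0; last first.
    apply: SW_dom => [|v]; first by apply/set0Pn; exists w.
    rewrite !inE !negb_or => /andP [/and3P [vD vu vS] vX].
    by apply: IH; rewrite ?inE ?negb_or ?vD ?vS ?vX // eq_sym vu.
  have [v vfree] := set0Pn _ ne.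
  have evu : v = u.
    apply/eqP; apply: contraTT vfree => vu; move/setP/(_ v): X0.
    by rewrite !inE !negb_or vu => ->.
  apply: SW_end; apply: staller_won_subset (subsetUr _ _) _.
  apply: (StallerWins_stuck (H v vfree)).
  by rewrite -setUA -setUCA evu.
Qed.

Lemma StallerWins_first X D S : StallerWins X D S true -> StallerWins X D S false.
Proof.
move=> H; have [X0 | /set0Pn [v vfree]] := eqVneq (X :\: (D :|: S)) set0; last first.
  have vD : v \notin D by move: vfree; rewrite !inE negb_or => /andP [/andP [->]].
  exact: SW_stall vfree (StallerWins_addS H vD).
exact/SW_end/(StallerWins_stuck H).
Qed.

Lemma StallerWins_addD_out X D S t v :
  v \notin X -> StallerWins X D S t -> StallerWins X (v |: D) S t.
Proof.
move=> vX; have free_same D' Y : X :\: ((v |: D') :|: Y) = X :\: (D' :|: Y).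
  apply/setP=> w; rewrite !inE; case: (eqVneq w v) => [-> | //]; by rewrite (negPf vX) !andbF.
elim=> {D S t} [D S t W | D S w wfree _ IH | D S ne _ IH].
- exact: SW_end.
- by apply: (SW_stall (v := w)); rewrite ?free_same.
- apply: SW_dom => [|w]; rewrite free_same // => wfree.
  by rewrite setUCA; apply: IH.
Qed.

Lemma StallerWins_widen A X W D S t : A \subset X ->
  (forall S, W \subset S -> staller_won A S -> staller_won X S) ->
  W \subset S -> StallerWins A D S t -> StallerWins X D S t.
Proof.
move=> sAX wonAX; have freeX Y v : v \in A :\: Y -> v \in X :\: Y.
  exact/subsetP/setSD.
have [n] := ubnP #|X :\: (D :|: S)|; elim: n D S t => // n IH D S t /ltnSE size_lt WS H.
case: H size_lt WS => {D S t} [D S t won | D S v vfree H | D S ne H] size_lt WS.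
- exact/SW_end/wonAX.
- apply: SW_stall (freeX _ _ vfree) _; apply: IH (H).
    by rewrite setUCA; apply: leq_trans size_lt; apply: card_setDU1_lt; apply: freeX.
  exact: subset_trans WS (subsetUr _ _).
- apply: SW_dom => [|v vfree].
    by apply: contraNneq ne => X0; rewrite -subset0 -X0 setSD.
  apply: IH; first by rewrite -setUA; apply: leq_trans size_lt; apply: card_setDU1_lt.
    exact: WS.
  have [vA | vA] := boolP (v \in A).
    by apply: H; move: vfree; rewrite !inE vA andbT => /andP [].
  (* a Dominator move outside A only hands Staller an extra move in A *)
  exact/StallerWins_first/StallerWins_addD_out/(SW_dom ne H).
Qed.

Lemma StallerWins_union A B X D S : A \subset X -> B \subset X -> [disjoint A & B] ->
  (forall S, staller_won A S -> staller_won X S) ->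
  (forall S, staller_won B S -> staller_won X S) ->
  X :\: (D :|: S) != set0 -> StallerWins A D S false -> StallerWins B D S false ->
  StallerWins X D S true.
Proof.
move=> sAX sBX dAB wonAX wonBX ne HA HB; apply: SW_dom => // v _.
have [vA | vA] := boolP (v \in A).
  apply: (StallerWins_widen (W := set0)) sBX _ (sub0set _) _ => [S' _|]; first exact: wonBX.
  by apply: StallerWins_addD_out HB; rewrite (disjointFr dAB vA).
apply: (StallerWins_widen (W := set0)) sAX _ (sub0set _) _ => [S' _|]; first exact: wonAX.
exact: StallerWins_addD_out HA.
Qed.

Lemma cnbh_sym x y : symmetric e -> (x \in cnbh e y) = (y \in cnbh e x).
Proof. by move=> sr; rewrite !inE eq_sym sr. Qed.

Lemma DomWins_not_StallerWins D S t : symmetric e -> [disjoint D & S] ->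
  DomWins e D S t -> ~ StallerWins setT D S t.
Proof.
move=> sr + H; elim: H => {D S t} [D S t full dom | D S v vfree _ IH | D S nfull _ IH] dDS HS.
- have X0 : setT :\: (D :|: S) = set0 by rewrite full setDv.
  have /exists_inP [x _ sub] := StallerWins_stuck HS X0.
  have /exists_inP [y yD xy] := forallP dom x.
  have yS : y \in S by apply: (subsetP sub); rewrite in_setI in_setT andbT cnbh_sym.
  by rewrite (disjointFr dDS yD) in yS.
- have vS : v \notin S by move: vfree; rewrite inE negb_or => /andP [].
  apply: (IH (disjoint_setU1l dDS vS)).
  have [won | Hdom] := StallerWins_dom_inv HS; first exact: SW_end.
  by apply: Hdom; rewrite in_setD vfree in_setT.
- have dDvS v : v \notin D :|: S -> [disjoint D & v |: S].
    rewrite inE negb_or disjoint_sym => /andP [vD _].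
    by apply: disjoint_setU1l; rewrite 1?disjoint_sym.
  have [won | [v vfree Hv]] := StallerWins_stall_inv HS.
    have /subsetPn [v _ vfree] : ~~ (setT \subset D :|: S) by rewrite subTset.
    apply: (IH v vfree (dDvS v vfree)); apply: SW_end.
    exact: staller_won_subset (subsetUr _ _) won.
  by rewrite in_setD in_setT andbT in vfree; apply: (IH v vfree (dDvS v vfree) Hv).
Qed.

End StallerGame.

Section PairVertices.
Variable T : eqType.
Implicit Types (P : seq (T * T)) (p q : T * T).

Definition pair_vertices P : seq T := flatten [seq [:: p.1; p.2] | p <- P].

Lemma pair_vertices_cat P1 P2 :
  pair_vertices (P1 ++ P2) = pair_vertices P1 ++ pair_vertices P2.
Proof. by rewrite /pair_vertices map_cat flatten_cat. Qed.

Lemma uniq_pair_vertices_neq P p : uniq (pair_vertices P) -> p \in P -> p.1 != p.2.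
Proof.
elim: P => // a P IH; rewrite [pair_vertices _]/= cat_uniq => /and3P [ua _ uP].
by rewrite inE => /predU1P [-> | /IH ->]; rewrite // /= inE andbT in ua.
Qed.

Lemma uniq_pair_vertices_inj P p q x : uniq (pair_vertices P) -> p \in P -> q \in P ->
  x \in [:: p.1; p.2] -> x \in [:: q.1; q.2] -> p = q.
Proof.
elim: P => // a P IH; rewrite [pair_vertices _]/= cat_uniq => /and3P [_ /hasPn aP uP].
have notin r : r \in P -> x \in [:: r.1; r.2] -> x \notin [:: a.1; a.2].
  by move=> rP xr; apply: aP; apply/flatten_mapP; exists r.
move=> /predU1P [-> | pP] /predU1P [-> | qP] xp xq //.
- by have := notin q qP xq; rewrite xp.
- by have := notin p pP xp; rewrite xq.
- exact: IH.
Qed.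

End PairVertices.

Section PairingStrategy.
Variable V : finType.
Variable e : rel V.
Variable P : seq (V * V).
Hypothesis P_pds : pairing_dominating_set e P.
Implicit Types (D S : {set V}) (p : V * V).

Definition pair_secured D S p := [|| p.1 \in D, p.2 \in D | (p.1 \notin S) && (p.2 \notin S)].

Definition pairs_secured D S := {in P, forall p, pair_secured D S p}.

Lemma pair_secured_mem D S p u : u \in [:: p.1; p.2] -> u \in D -> pair_secured D S p.
Proof. by move=> + uD; rewrite /pair_secured !inE => /orP [] /eqP <-; rewrite uD ?orbT. Qed.

Lemma pair_secured_addD D S p u : pair_secured D S p -> pair_secured (u |: D) S p.
Proof. by rewrite /pair_secured !inE => /or3P [] ->; rewrite ?orbT. Qed.

Lemma pair_secured_addS D S p v :
  v \notin [:: p.1; p.2] -> pair_secured D (v |: S) p = pair_secured D S p.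
Proof.
by rewrite !inE negb_or /pair_secured !inE ![v == _]eq_sym => /andP [/negPf -> /negPf ->].
Qed.

Lemma pairs_secured_dominating D S :
  D :|: S = setT -> pairs_secured D S -> dominating e D.
Proof.
move=> full sec; apply/forallP=> x; have [p pP /andP [x1 x2]] := P_pds.2 x.
have p1DS : p.1 \in D :|: S by rewrite full inE.
move: (sec p pP) p1DS; rewrite /pair_secured inE => /or3P [p1D | p2D | /andP [/negPf -> _]].
- by move=> _; apply/exists_inP; exists p.1.
- by move=> _; apply/exists_inP; exists p.2.
- by rewrite orbF => p1D; apply/exists_inP; exists p.1.
Qed.

Lemma pairs_secured_response D S v : pairs_secured D S -> v \notin D :|: S ->
  pairs_secured D (v |: S) \/
  exists2 u, u \notin D :|: (v |: S) & pairs_secured (u |: D) (v |: S).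
Proof.
move=> sec vfree; have uP := P_pds.1.
pose open p := [&& p \in P, v \in [:: p.1; p.2], p.1 \notin D & p.2 \notin D].
have [p /and4P [pP vp p1D p2D] | closed] := pickP open; last first.
  left=> q qP; have [vq | vq] := boolP (v \in [:: q.1; q.2]);
    last by rewrite pair_secured_addS ?sec.
  move: (closed q); rewrite /open qP vq /= => /negbT; rewrite negb_and !negbK.
  by case/orP=> qD; rewrite /pair_secured qD ?orbT.
have [p1S p2S] : p.1 \notin S /\ p.2 \notin S.
  by move: (sec p pP); rewrite /pair_secured (negPf p1D) (negPf p2D) => /andP.
have [u up uv] : exists2 u, u \in [:: p.1; p.2] & u != v.
  have p12 := uniq_pair_vertices_neq uP pP.
  case: (eqVneq p.1 v) => [e1 | n1]; [exists p.2 | exists p.1]; rewrite ?inE ?eqxx ?orbT //.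
  by rewrite -e1 eq_sym.
right; exists u.
  by move: up; rewrite !inE !negb_or uv => /orP [] /eqP ->; rewrite ?p1D ?p2D ?p1S ?p2S.
move=> q qP; have [vq | vq] := boolP (v \in [:: q.1; q.2]).
  rewrite -(uniq_pair_vertices_inj uP pP qP vp vq).
  by apply: pair_secured_mem up _; rewrite setU11.
by rewrite pair_secured_addS // pair_secured_addD ?sec.
Qed.

Lemma pairs_secured_DomWins D S :
  pairs_secured D S -> DomWins e D S false /\ DomWins e D S true.
Proof.
have shrink (Y : {set V}) u : u \notin Y -> #|setT :\: (u |: Y)| < #|setT :\: Y|.
  by move=> uY; apply: card_setDU1_lt; rewrite in_setD uY in_setT.
have [n] := ubnP #|setT :\: (D :|: S)|; elim: n D S => // n IH D S /ltnSE size_lt sec.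
have [full | nfull] := eqVneq (D :|: S) setT.
  by have dom := pairs_secured_dominating full sec; split; apply: DW_end.
split.
- apply: DW_stall nfull _ => v vfree.
  have lt_v : #|setT :\: (D :|: (v |: S))| < n.
    by rewrite setUCA; apply: leq_trans (shrink _ _ vfree) size_lt.
  have [secv | [u ufree secu]] := pairs_secured_response sec vfree.
    exact: (IH _ _ lt_v secv).2.
  have lt_u : #|setT :\: ((u |: D) :|: (v |: S))| < n.
    by rewrite -setUA; apply: ltn_trans (shrink _ _ ufree) lt_v.
  exact: DW_dom ufree (IH _ _ lt_u secu).1.
- have /subsetPn [v _ vfree] : ~~ (setT \subset D :|: S) by rewrite subTset.
  have lt_v : #|setT :\: ((v |: D) :|: S)| < n.
    by rewrite -setUA; apply: leq_trans (shrink _ _ vfree) size_lt.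
  apply: DW_dom vfree (IH _ _ lt_v _).1.
  by move=> p pP; apply/pair_secured_addD/sec.
Qed.

Lemma pairing_dominating_set_outcome_D : outcome_D e.
Proof.
have sec0 : pairs_secured set0 set0 by move=> p _; rewrite /pair_secured !inE.
by have [] := pairs_secured_DomWins sec0; split.
Qed.

End PairingStrategy.

Section Dichotomy.
Variable V : finType.
Variable e : rel V.
Hypothesis sr : symmetric e.
Implicit Types (A B X S : {set V}) (P : seq (V * V)) (Y : seq V).

Definition pair_dominated P Y x :=
  has (fun p => (x \in cnbh e p.1) && (x \in cnbh e p.2)) P || has (fun y => x \in cnbh e y) Y.

(* [P] are the pairs and [Y] the unpaired vertices, each of which dominates its own
   closed neighbourhood. *)
Definition pairing_dom_on X P Y :=
  [/\ uniq (Y ++ pair_vertices P), {subset Y ++ pair_vertices P <= X} &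
      {in X, forall x, pair_dominated P Y x}].

Definition pds_with X k := exists P Y, size Y <= k /\ pairing_dom_on X P Y.

Definition pds_dichotomy X :=
  (pds_with X 0 \/ StallerWins e X set0 set0 false) /\
  (pds_with X 1 \/ StallerWins e X set0 set0 true).

Lemma pds_with_mono X k l : k <= l -> pds_with X k -> pds_with X l.
Proof. by move=> kl [P [Y [Yk dom]]]; exists P, Y; split=> //; apply: leq_trans kl. Qed.

Lemma pds_with_union A B k l : [disjoint A & B] ->
  pds_with A k -> pds_with B l -> pds_with (A :|: B) (k + l).
Proof.
move=> dAB [PA [YA [YAk [uA sA dA]]]] [PB [YB [YBl [uB sB dB]]]].
exists (PA ++ PB), (YA ++ YB); split; first by rewrite size_cat leq_add.
have perm := permEl (perm_catACA YA YB (pair_vertices PA) (pair_vertices PB)).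
rewrite /pairing_dom_on pair_vertices_cat; split.
- rewrite (perm_uniq perm) cat_uniq uA uB andbT.
  by apply/hasPn=> x /sB xB; apply/negP=> /sA xA; rewrite (disjointFr dAB xA) in xB.
- by move=> x; rewrite (perm_mem perm) mem_cat inE => /orP [/sA | /sB] ->; rewrite ?orbT.
- move=> x /setUP [/dA | /dB]; rewrite /pair_dominated !has_cat.
    by case/orP=> ->; rewrite ?orbT.
  by case/orP=> ->; rewrite ?orbT.
Qed.

Lemma staller_won_union A B S :
  anticomplete e A B -> staller_won e A S -> staller_won e (A :|: B) S.
Proof.
move=> anti /exists_inP [x xA sub]; apply/exists_inP; exists x; first by rewrite inE xA.
apply/subsetP=> y /setIP [yN yAB]; apply: (subsetP sub); rewrite inE yN /=.
case/setUP: yAB => // yB; move: yN; rewrite !inE => /predU1P [-> // | exy].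
by move: (anti x y xA yB); rewrite exy.
Qed.

Lemma staller_won_cone B S w : w \in S -> staller_won e B S -> staller_won e (w |: B) S.
Proof.
move=> wS /exists_inP [x xB sub]; apply/exists_inP; exists x; first by rewrite !inE xB orbT.
apply/subsetP=> y /setIP [yN /setU1P [-> // | yB]].
by apply: (subsetP sub); rewrite inE yN yB.
Qed.

Lemma dichotomy_union A B : [disjoint A & B] -> A != set0 -> anticomplete e A B ->
  pds_dichotomy A -> pds_dichotomy B -> pds_dichotomy (A :|: B).
Proof.
move=> dAB A0 anti [HA1 HA2] [HB1 HB2].
have wonA S : staller_won e A S -> staller_won e (A :|: B) S by apply: staller_won_union.
have wonB S : staller_won e B S -> staller_won e (A :|: B) S.
  by rewrite setUC; apply/staller_won_union/anticomplete_sym.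
have widenA t : StallerWins e A set0 set0 t -> StallerWins e (A :|: B) set0 set0 t.
  exact: StallerWins_widen (subsetUl _ _) (fun S _ => wonA S) (sub0set _).
have widenB t : StallerWins e B set0 set0 t -> StallerWins e (A :|: B) set0 set0 t.
  exact: StallerWins_widen (subsetUr _ _) (fun S _ => wonB S) (sub0set _).
split.
  case: HA1 => [pA | /widenA]; last by right.
  case: HB1 => [pB | /widenB]; last by right.
  by left; apply: pds_with_union pA pB.
case: HA1 => [pA | sA].
  case: HB2 => [pB | /widenB]; last by right.
  by left; apply: pds_with_union pA pB.
case: HB1 => [pB | sB].
  case: HA2 => [pA | /widenA]; last by right.
  by left; exact: pds_with_union dAB pA pB.
right; apply: StallerWins_union (subsetUl _ _) (subsetUr _ _) dAB wonA wonB _ sA sB.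
by rewrite setU0 setD0 setU_eq0 negb_and A0.
Qed.

Lemma pds_with_join2 A B : [disjoint A & B] -> 1 < #|A| -> 1 < #|B| ->
  complete e A B -> pds_with (A :|: B) 0.
Proof.
move=> dAB /card_gt1P [a1 [a2 [a1A a2A a12]]] /card_gt1P [b1 [b2 [b1B b2B b12]]] cAB.
have neq a b : a \in A -> b \in B -> a != b.
  by move=> aA; apply: contraTneq => <-; rewrite (disjointFr dAB aA).
exists [:: (a1, a2); (b1, b2)], [::]; split=> //; split.
- by rewrite /= !inE !negb_or a12 b12 !neq.
- by move=> x; rewrite /= !inE => /or4P [] /eqP ->; rewrite ?a1A ?a2A ?b1B ?b2B ?orbT.
- have adjN a b : a \in A -> b \in B -> (a \in cnbh e b) && (b \in cnbh e a).
    by move=> aA bB; rewrite !inE sr (cAB a b aA bB) !orbT.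
  move=> x /setUP [xA | xB]; rewrite /pair_dominated /=.
    by have /andP [-> _] := adjN x b1 xA b1B; have /andP [-> _] := adjN x b2 xA b2B; rewrite !orbT.
  by have /andP [_ ->] := adjN a1 x a1A xB; have /andP [_ ->] := adjN a2 x a2A xB.
Qed.

Lemma pds_with_cone B w : w \notin B -> B != set0 -> (forall b, b \in B -> e w b) ->
  pds_with B 1 -> pds_with (w |: B) 0.
Proof.
move=> wB B0 adj [P [Y [Y1 [uPY sPY dPY]]]].
have wN b : b \in B -> w \in cnbh e b by move=> bB; rewrite !inE sr (adj b bB) orbT.
have Nw b : b \in B -> b \in cnbh e w by move=> bB; rewrite !inE (adj b bB) orbT.
case: Y Y1 uPY sPY dPY => [|y [|//]] _ uPY sPY dPY.
  exists P, [::]; split=> //; split=> // [x /sPY xB | x /setU1P [-> | /dPY //]].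
    by rewrite inE xB orbT.
  have [b bB] := set0Pn _ B0; have := dPY b bB; rewrite /pair_dominated orbF.
  case/hasP=> p pP _; apply/orP; left; apply/hasP; exists p => //.
  have [p1B p2B] : p.1 \in B /\ p.2 \in B.
    by split; apply/sPY/flatten_mapP; exists p; rewrite // !inE eqxx ?orbT.
  by rewrite !wN.
have yB : y \in B by apply: sPY; rewrite inE eqxx.
exists ((w, y) :: P), [::]; split=> //; split.
- rewrite /= in uPY *; rewrite uPY andbT inE negb_or.
  apply/andP; split; first by apply: contraNneq wB => ->.
  by apply: contra wB => wP; apply: sPY; rewrite inE wP orbT.
- move=> x; rewrite /= !inE => /or3P [-> | /eqP -> | xP]; rewrite ?yB ?orbT //.
  by rewrite sPY ?orbT // inE xP orbT.
- move=> x /setU1P [-> | xB]; first by rewrite /pair_dominated /= setU11 wN.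
  move: (dPY x xB); rewrite /pair_dominated /= orbF => /orP [-> | ->]; first by rewrite orbT.
  by rewrite Nw.
Qed.

Lemma dichotomy_cone B w : w \notin B -> B != set0 -> (forall b, b \in B -> e w b) ->
  pds_with B 1 \/ StallerWins e B set0 set0 true -> pds_dichotomy (w |: B).
Proof.
move=> wB B0 adj HB; split; last first.
  left; exists [::], [:: w]; split=> //; split=> //.
    by move=> x; rewrite inE => /eqP ->; rewrite setU11.
  by move=> x /setU1P [-> | xB]; rewrite /pair_dominated /= ?setU11 // !inE (adj x xB) orbT.
case: HB => [pB | sB]; first by left; apply: pds_with_cone.
right; apply: (SW_stall (v := w)); first by rewrite !inE eqxx.
apply: (StallerWins_widen (W := [set w])) (subsetUr _ _) _ _ (StallerWins_addS sB _) => //.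
- by move=> S; rewrite sub1set => wS; apply: staller_won_cone.
- by rewrite sub1set setU11.
- by rewrite inE.
Qed.

Lemma dichotomy_join A B : [disjoint A & B] -> A != set0 -> B != set0 -> complete e A B ->
  pds_dichotomy A -> pds_dichotomy B -> pds_dichotomy (A :|: B).
Proof.
move=> dAB A0 B0 cAB HA HB.
have [A1 | A2] := leqP #|A| 1.
  have /cards1P [w Aw] : #|A| == 1 by rewrite eqn_leq A1 card_gt0.
  rewrite Aw; apply: dichotomy_cone HB.2 => // [|b bB]; last by apply: cAB; rewrite ?Aw ?set11.
  by rewrite -disjoints1 -Aw.
have [B1 | B2] := leqP #|B| 1; last first.
  by have p0 := pds_with_join2 dAB A2 B2 cAB; split; left; last exact: pds_with_mono p0.
have /cards1P [w Bw] : #|B| == 1 by rewrite eqn_leq B1 card_gt0.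
rewrite Bw setUC; apply: dichotomy_cone HA.2 => // [|a aA]; last by rewrite sr cAB ?Bw ?set11.
by rewrite -disjoints1 -Bw disjoint_sym.
Qed.

Lemma dichotomy_small X : #|X| <= 1 -> pds_dichotomy X.
Proof.
rewrite leq_eqVlt ltnS leqn0 cards_eq0 => /orP [/cards1P [x ->] | /eqP ->].
  split.
    right; apply: (SW_stall (v := x)); first by rewrite !inE eqxx.
    by apply: SW_end; apply/exists_inP; exists x; rewrite ?set11 // setU0 subsetIr.
  left; exists [::], [:: x]; split=> //; split=> //.
    by move=> y; rewrite inE => /eqP ->; rewrite set11.
  by move=> y /set1P ->; rewrite /pair_dominated /= !inE eqxx.
have p0 : pds_with set0 0 by exists [::], [::]; split=> //; split=> // x; rewrite inE.
by split; left; last exact: pds_with_mono p0.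
Qed.

Lemma cograph_dichotomy X : cograph e -> pds_dichotomy X.
Proof.
move=> P4; have [n] := ubnP #|X|; elim: n X => // n IH X /ltnSE leXn.
have [X1 | X2] := leqP #|X| 1; first exact: dichotomy_small.
have [A [B [XE dAB A0 B0 sAB]]] := cograph_decomposes sr P4 X2.
have cardAB : #|A| + #|B| <= n.
  by rewrite -cardsUI (disjoint_setI0 dAB) cards0 addn0 XE.
have HA : pds_dichotomy A.
  by apply: IH; apply: leq_trans cardAB; rewrite -addn1 leq_add2l card_gt0.
have HB : pds_dichotomy B.
  by apply: IH; apply: leq_trans cardAB; rewrite -add1n leq_add2r card_gt0.
by rewrite -XE; case: sAB => [anti | cAB]; [apply: dichotomy_union | apply: dichotomy_join].
Qed.

Lemma pds_with_setT_admits : pds_with setT 0 -> admits_pairing_dominating_set e.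
Proof.
case=> P [Y [Y0 [uP _ dP]]]; case: Y Y0 uP dP => [|//] _ uP dP; exists P; split=> // x.
by have := dP x (in_setT x); rewrite /pair_dominated orbF => /hasP [p pP ?]; exists p.
Qed.

End Dichotomy.

Theorem theorem6 (V : finType) (e : rel V) :
  symmetric e -> irreflexive e -> cograph e ->
  (outcome_D e <-> admits_pairing_dominating_set e).
Proof.
(* Loops do not change closed neighbourhoods. *)
move=> sr _ P4; split=> [[_ Dsecond] | [P Ppds]].
  have [[pds | Sfirst] _] := cograph_dichotomy sr setT P4; first exact: pds_with_setT_admits.
  by case: (DomWins_not_StallerWins sr _ Dsecond Sfirst); rewrite -setI_eq0 set0I.
exact: pairing_dominating_set_outcome_D Ppds.
Qed.
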